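(* Let $k_0,k_1,k_{-1},k_2,e_T$ be nonnegative real parameters and consider the planar system \[ \dot s = k_0-k_1(e_T-c)s+k_{-1}c,\qquad \dot c = k_1(e_T-c)s-(k_{-1}+k_2)c . \] Then: (a) The system has infinitely many stationary points in $\mathbb{R}^2$ if and only if one of the following holds: $k_0=k_1=0$; $k_0=e_T=0$; $k_0=k_2=0$. (b) If the number of stationary points in $\mathbb{R}^2$ is finite, then it is $0$ or $1$. There is exactly one stationary point if and only if $k_1\neq 0$, $k_2\neq 0$ and $k_2e_T-k_0\neq 0$; in that case the stationary point is \[ P_0=(\widehat s,\widehat c)=\left(\frac{(k_{-1}+k_2)k_0}{k_1(k_2e_T-k_0)},\ \frac{k_0}{k_2}\right). \] This point lies in the first quadrant if and only if $k_2e_T-k_0>0$, in which case it is an attracting node; it lies in the second quadrant if and only if $k_2e_T-k_0<0$, in which case it is a saddle point. (c) The first quadrant is positively invariant, and solutions starting in the first quadrant exist for all $t\ge 0$. If $k_{-1}+k_2>0$, then every solution starting in the first quadrant enters the (positively invariant) subset $\{c\le e_T\}$ at some positive time. (d) The system admits no nonconstant closed trajectory.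
   Context: This is the mass-action model of the open Michaelis--Menten mechanism with constant substrate inflow: $s$ and $c$ are the concentrations of substrate and enzyme–substrate complex, $k_0$ the inflow rate, $k_1,k_{-1},k_2$ rate constants, and $e_T$ the total enzyme concentration. The ''first quadrant'' is $\{s\ge 0, c\ge 0\}$. *)

From Stdlib Require Import Reals List.
From Coquelicot Require Import Coquelicot.
Open Scope R_scope.

(* Open Michaelis--Menten vector field; km1 stands for k_{-1}. *)
Definition fs (k0 k1 km1 k2 eT s c : R) : R := k0 - k1 * (eT - c) * s + km1 * c.
Definition fc (k0 k1 km1 k2 eT s c : R) : R := k1 * (eT - c) * s - (km1 + k2) * c.

Definition stationary (k0 k1 km1 k2 eT : R) (p : R * R) : Prop :=
  fs k0 k1 km1 k2 eT (fst p) (snd p) = 0 /\ fc k0 k1 km1 k2 eT (fst p) (snd p) = 0.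

Definition infinite_set (P : R * R -> Prop) : Prop :=
  ~ (exists l : list (R * R), forall p, P p -> In p l).

Definition first_quadrant (p : R * R) : Prop := 0 <= fst p /\ 0 <= snd p.
Definition second_quadrant (p : R * R) : Prop := fst p < 0 /\ 0 < snd p.

Definition jac11 k0 k1 km1 k2 eT (p : R * R) : R :=
  Derive (fun x => fs k0 k1 km1 k2 eT x (snd p)) (fst p).
Definition jac12 k0 k1 km1 k2 eT (p : R * R) : R :=
  Derive (fun y => fs k0 k1 km1 k2 eT (fst p) y) (snd p).
Definition jac21 k0 k1 km1 k2 eT (p : R * R) : R :=
  Derive (fun x => fc k0 k1 km1 k2 eT x (snd p)) (fst p).
Definition jac22 k0 k1 km1 k2 eT (p : R * R) : R :=
  Derive (fun y => fc k0 k1 km1 k2 eT (fst p) y) (snd p).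

(* l1, l2 are the eigenvalues (with multiplicity) of the 2x2 matrix [[a,b],[c,d]]:
   its characteristic polynomial factors as (x-l1)(x-l2). *)
Definition eigenvalues2 (a b c d l1 l2 : R) : Prop :=
  forall x : R, (x - a) * (x - d) - b * c = (x - l1) * (x - l2).

Definition attracting_node k0 k1 km1 k2 eT (p : R * R) : Prop :=
  exists l1 l2, l1 < 0 /\ l2 < 0 /\
    eigenvalues2 (jac11 k0 k1 km1 k2 eT p) (jac12 k0 k1 km1 k2 eT p)
                 (jac21 k0 k1 km1 k2 eT p) (jac22 k0 k1 km1 k2 eT p) l1 l2.

Definition saddle_point k0 k1 km1 k2 eT (p : R * R) : Prop :=
  exists l1 l2, l1 < 0 /\ 0 < l2 /\
    eigenvalues2 (jac11 k0 k1 km1 k2 eT p) (jac12 k0 k1 km1 k2 eT p)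
                 (jac21 k0 k1 km1 k2 eT p) (jac22 k0 k1 km1 k2 eT p) l1 l2.

Definition is_solution_on k0 k1 km1 k2 eT (s c : R -> R) (I : R -> Prop) : Prop :=
  forall t, I t ->
    is_derive s t (fs k0 k1 km1 k2 eT (s t) (c t)) /\
    is_derive c t (fc k0 k1 km1 k2 eT (s t) (c t)).

Definition positively_invariant k0 k1 km1 k2 eT (A : R * R -> Prop) : Prop :=
  forall (T : R) (s c : R -> R), 0 < T ->
    is_solution_on k0 k1 km1 k2 eT s c (fun t => 0 <= t < T) ->
    A (s 0, c 0) -> forall t, 0 <= t < T -> A (s t, c t).

Definition P0 (k0 k1 km1 k2 eT : R) : R * R :=
  ((km1 + k2) * k0 / (k1 * (k2 * eT - k0)), k0 / k2).

From Stdlib Require Import Reals List Lra Psatz Classical Arith.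
From Coquelicot Require Import Coquelicot.
Open Scope R_scope.

(* Parts (a) and (b) are algebra: a stationary point has c = k0 / k2, which forces P0 unless one
   of the three degenerate cases occurs, where a whole curve of stationary points appears.  At P0
   the Jacobian has determinant k1 (k2 eT - k0) and, when this is positive, a nonnegative
   discriminant: a node or a saddle.

   (c) The field is cooperative on the boundary of the quadrant, so the squared negative parts
   of s and c obey a Gronwall inequality and stay zero; the same argument for eT - c gives the
   invariance of c <= eT, and above eT the complex decays at rate at least (km1 + k2) eT.  Since
   (s + c)' = k0 - k2 c <= k0, forward solutions stay in a box growing linearly in t; clipping the
   field outside that box makes it Lipschitz on every time strip, so Picard iteration converges
   on the whole line to a solution that never feels the clipping.

   (d) When k1 = 0, or km1 + k2 = 0 (then s + c is constant), c solves a scalar autonomous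
   equation and a potential shows that a periodic c is constant.  Otherwise, an orbit meeting c = eT stays below it, its maximum
   forces eT = 0 and then c = 0; an orbit avoiding c = eT makes a Lyapunov function monotone,
   strictly unless c' = 0.  Once c is constant, s solves a scalar autonomous equation too. *)

Ltac continuity_R := repeat match goal with
  | |- continuous (fun _ => ?c) _ => apply continuous_const
  | |- continuous (fun t => t) _ => apply continuous_id
  | |- continuous (fun t => Rabs (@?f t)) _ => apply (continuous_Rabs_comp f)
  | |- continuous (fun t => @?f t + @?g t) _ => apply (continuous_plus (V := R_NormedModule) f g)
  | |- continuous (fun t => @?f t - @?g t) _ => apply (continuous_minus (V := R_NormedModule) f g)
  | |- continuous (fun t => - @?f t) _ => apply (continuous_opp (V := R_NormedModule) f)
  | |- continuous (fun t => @?f t * @?g t) _ => apply (continuous_mult (K := R_AbsRing) f g)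
  | |- continuous (fun t => @?f t / @?g t) _ =>
      apply (continuous_mult (K := R_AbsRing) f (fun t => / g t))
  | |- continuous _ _ => assumption
  end.

(** * Differential inequalities *)

Lemma is_derive_continuous (f : R -> R) x l : is_derive f x l -> continuous f x.
Proof. intros H. apply (ex_derive_continuous (V := R_NormedModule)). now exists l. Qed.

Lemma is_derive_continuity_pt (f : R -> R) x l : is_derive f x l -> continuity_pt f x.
Proof. intros H. apply continuity_pt_filterlim, (is_derive_continuous f x l H). Qed.

Lemma is_derive_eq (f : R -> R) (x l l' : R) : is_derive f x l -> l = l' -> is_derive f x l'.
Proof. now intros H <-. Qed.

Lemma is_derive_plus_R (f g : R -> R) (x df dg : R) :
  is_derive f x df -> is_derive g x dg -> is_derive (fun t => f t + g t) x (df + dg).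
Proof. intros Hf Hg. exact (is_derive_plus f g x df dg Hf Hg). Qed.

Lemma is_derive_minus_R (f g : R -> R) (x df dg : R) :
  is_derive f x df -> is_derive g x dg -> is_derive (fun t => f t - g t) x (df - dg).
Proof. intros Hf Hg. exact (is_derive_minus f g x df dg Hf Hg). Qed.

Lemma is_derive_const_minus (u : R -> R) a x du :
  is_derive u x du -> is_derive (fun t => a - u t) x (- du).
Proof.
  intros Hu. eapply is_derive_eq.
  - apply (is_derive_minus (fun _ => a) u x _ _ (is_derive_const a x) Hu).
  - unfold minus, plus, opp, zero; simpl. ring.
Qed.

Lemma is_derive_mult_eq (f g : R -> R) x df dg l :
  is_derive f x df -> is_derive g x dg -> df * g x + f x * dg = l ->
  is_derive (fun t => f t * g t) x l.
Proof.
  intros Hf Hg <-. apply (is_derive_mult f g x df dg Hf Hg). intros; apply Rmult_comm.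
Qed.

Lemma derive_nonneg_le (g dg : R -> R) a b : a <= b ->
  (forall t, a <= t <= b -> is_derive g t (dg t)) ->
  (forall t, a <= t <= b -> 0 <= dg t) -> g a <= g b.
Proof.
  intros Hab Hd Hpos.
  destruct (MVT_gen g a b dg) as [c [Hc E]];
    rewrite ?Rmin_left, ?Rmax_right in * by lra.
  - intros x Hx; apply Hd; lra.
  - intros x Hx; apply (is_derive_continuity_pt g x (dg x)), Hd; lra.
  - specialize (Hpos c Hc). nra.
Qed.

Lemma derive_nonpos_le (g dg : R -> R) a b : a <= b ->
  (forall t, a <= t <= b -> is_derive g t (dg t)) ->
  (forall t, a <= t <= b -> dg t <= 0) -> g b <= g a.
Proof.
  intros Hab Hd Hneg.
  enough (- g a <= - g b) by lra.
  apply (derive_nonneg_le (fun t => - g t) (fun t => - dg t)); auto.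
  - intros t Ht. apply (is_derive_opp g t (dg t)); auto.
  - intros t Ht. specialize (Hneg t Ht). lra.
Qed.

Lemma gronwall_vanishing (phi dphi h : R -> R) a b : a <= b ->
  (forall t, a <= t <= b -> is_derive phi t (dphi t)) ->
  (forall t, a <= t <= b -> continuous h t) ->
  (forall t, a <= t <= b -> dphi t <= h t * phi t) ->
  (forall t, a <= t <= b -> 0 <= phi t) ->
  phi a = 0 -> forall t, a <= t <= b -> phi t = 0.
Proof.
  intros Hab Hd Hc Hle Hpos Ha t Ht.
  destruct (continuity_ab_maj h a b Hab) as [tmax [Hmax _]].
  { intros x Hx. apply continuity_pt_filterlim, Hc, Hx. }
  set (K := Rmax (h tmax) 0).
  (* [phi e^{-Kt}] is nonincreasing, nonnegative and vanishes at [a]. *)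
  assert (Hdec : phi t * exp (- (K * t)) <= phi a * exp (- (K * a))).
  { apply (derive_nonpos_le (fun x => phi x * exp (- (K * x)))
             (fun x => (dphi x - K * phi x) * exp (- (K * x)))); [lra | |].
    - intros x Hx. eapply (is_derive_mult_eq phi (fun x => exp (- (K * x)))); [apply Hd; lra | |].
      + auto_derive; [exact I | reflexivity].
      + ring.
    - intros x Hx.
      specialize (Hle x ltac:(lra)); specialize (Hmax x ltac:(lra)); specialize (Hpos x ltac:(lra)).
      pose proof (exp_pos (- (K * x))). pose proof (Rmax_l (h tmax) 0 : h tmax <= K).
      assert (dphi x - K * phi x <= 0) by nra. nra. }
  rewrite Ha, Rmult_0_l in Hdec. specialize (Hpos t Ht).
  pose proof (exp_pos (- (K * t))). nra.
Qed.

Definition negsq (x : R) : R := Rmin x 0 ^ 2.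

Lemma negsq_ge0 x : 0 <= negsq x.
Proof. apply pow2_ge_0. Qed.

Lemma negsq_eq0 x : negsq x = 0 <-> 0 <= x.
Proof. unfold negsq, Rmin. destruct Rle_dec; split; intros; nra. Qed.

Lemma is_derive_negsq x : is_derive negsq x (2 * Rmin x 0).
Proof.
  destruct (Rtotal_order x 0) as [Hx | [-> | Hx]].
  - rewrite Rmin_left by lra.
    apply (is_derive_ext_loc (fun y => y ^ 2)); [| auto_derive; [exact I | ring]].
    apply (locally_interval _ x m_infty 0); [exact I | exact Hx |].
    intros y _ Hy. unfold negsq. rewrite Rmin_left; simpl in Hy; lra.
  - rewrite Rmin_right, Rmult_0_r by lra.
    apply is_derive_Reals. intros eps Heps. exists (mkposreal eps Heps). intros h Hh0 Hh.
    simpl in Hh. unfold negsq. rewrite Rplus_0_l, (Rmin_right 0 0), Rminus_0_r by lra.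
    assert (Habs : Rabs (Rmin h 0) <= Rabs h)
      by (unfold Rmin; destruct Rle_dec; [lra | rewrite Rabs_R0; apply Rabs_pos]).
    unfold Rdiv. rewrite pow_i, Rminus_0_r, Rabs_mult, Rabs_inv, <- RPow_abs by (auto || lia).
    apply (Rmult_lt_reg_r (Rabs h)); [now apply Rabs_pos_lt |].
    rewrite Rmult_assoc, Rinv_l, Rmult_1_r by now apply Rabs_no_R0.
    pose proof (Rabs_pos (Rmin h 0)). pose proof (Rabs_pos_lt h Hh0). simpl. nra.
  - rewrite Rmin_right by lra.
    apply (is_derive_ext_loc (fun _ => 0)); [| auto_derive; [exact I | ring]].
    apply (locally_interval _ x 0 p_infty); [exact Hx | exact I |].
    intros y Hy _. unfold negsq. simpl in Hy. rewrite Rmin_right by lra. simpl; ring.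
Qed.

Lemma is_derive_negsq_comp (u : R -> R) x du : is_derive u x du ->
  is_derive (fun t => negsq (u t)) x (2 * Rmin (u x) 0 * du).
Proof.
  intros Hu. rewrite Rmult_comm.
  apply (is_derive_comp negsq u x _ _ (is_derive_negsq (u x)) Hu).
Qed.

Lemma nonneg_preserved (u du g : R -> R) a b : a <= b ->
  (forall t, a <= t <= b -> is_derive u t (du t)) ->
  (forall t, a <= t <= b -> continuous g t) ->
  (forall t, a <= t <= b -> u t < 0 -> g t * u t <= du t) ->
  0 <= u a -> forall t, a <= t <= b -> 0 <= u t.
Proof.
  intros Hab Hd Hg Hlow Ha t Ht. apply negsq_eq0.
  apply (gronwall_vanishing (fun t => negsq (u t)) (fun t => 2 * Rmin (u t) 0 * du t)
           (fun t => 2 * g t) a b); auto.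
  - intros x Hx. apply is_derive_negsq_comp, Hd, Hx.
  - intros x Hx. specialize (Hg x Hx). continuity_R.
  - intros x Hx. unfold negsq, Rmin. destruct Rle_dec as [Hle | Hgt].
    + destruct (Req_dec (u x) 0) as [E | Hne]; [rewrite E; lra |].
      specialize (Hlow x Hx ltac:(lra)). nra.
    + lra.
  - intros x _. apply negsq_ge0.
  - now apply negsq_eq0.
Qed.

(** * Periodic functions *)

Definition periodic (f : R -> R) (T : R) : Prop := forall t, f (t + T) = f t.

Lemma periodic_shift_nat f T : periodic f T -> forall n t, f (t + INR n * T) = f t.
Proof.
  intros Hf n. induction n as [| n IH]; intros t.
  - simpl. now rewrite Rmult_0_l, Rplus_0_r.
  - rewrite S_INR, <- (IH t), <- (Hf (t + INR n * T)). f_equal. ring.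
Qed.

Lemma periodic_shift_above f T : 0 < T -> periodic f T ->
  forall t t1, exists t', t1 <= t' /\ f t' = f t.
Proof.
  intros HT Hf t t1. destruct (INR_unbounded ((t1 - t) / T)) as [n Hn].
  exists (t + INR n * T). split; [| apply (periodic_shift_nat f T Hf)].
  apply Rmult_gt_compat_r with (r := T) in Hn; [| lra].
  unfold Rdiv in Hn. rewrite Rmult_assoc, Rinv_l, Rmult_1_r in Hn by lra. lra.
Qed.

Lemma periodic_monotone_const (g : R -> R) T : 0 < T -> periodic g T ->
  (forall x y, x <= y -> g x <= g y) -> forall t, g t = g 0.
Proof.
  intros HT Hg Hmono t.
  destruct (periodic_shift_above g T HT Hg 0 t) as [t' [Ht' E']].
  destruct (periodic_shift_above (fun x => g (- x)) T HT) with (t := 0) (t1 := - t) as [t'' [Ht'' E'']].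
  { intros x. rewrite <- (Hg (- (x + T))). f_equal. ring. }
  simpl in E''. rewrite Ropp_0 in E''.
  pose proof (Hmono t t' ltac:(lra)). pose proof (Hmono (- t'') t ltac:(lra)). lra.
Qed.

Lemma periodic_derive_nonneg_const (g dg : R -> R) T : 0 < T -> periodic g T ->
  (forall t, is_derive g t (dg t)) -> (forall t, 0 <= dg t) ->
  (forall t, g t = g 0) /\ (forall t, dg t = 0).
Proof.
  intros HT Hg Hd Hpos.
  assert (Hconst : forall t, g t = g 0).
  { apply (periodic_monotone_const g T HT Hg). intros x y Hxy.
    apply (derive_nonneg_le g dg); auto. }
  split; [exact Hconst |]. intros t.
  rewrite <- (is_derive_unique g t (dg t) (Hd t)), (Derive_ext g (fun _ => g 0)) by auto.
  apply Derive_const.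
Qed.

Lemma periodic_autonomous_const (p V x : R -> R) T : 0 < T -> periodic x T ->
  (forall z, is_derive V z (p z)) -> (forall t, is_derive x t (p (x t))) ->
  forall t, x t = x 0.
Proof.
  intros HT Hx HV Hd.
  (* [V] is a potential: [V o x] has derivative [x'^2 >= 0]. *)
  destruct (periodic_derive_nonneg_const (fun t => V (x t)) (fun t => p (x t) * p (x t)) T HT)
    as [_ Hzero].
  - intros t. simpl. now rewrite Hx.
  - intros t. apply (is_derive_comp V x t _ _ (HV (x t)) (Hd t)).
  - intros t. apply Rle_0_sqr.
  - apply (periodic_derive_nonneg_const x (fun t => p (x t)) T HT Hx Hd).
    intros t. specialize (Hzero t). simpl in Hzero. nra.
Qed.

Lemma periodic_nonneg (u du g : R -> R) T t1 : 0 < T -> periodic u T ->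
  (forall t, is_derive u t (du t)) -> (forall t, continuous g t) ->
  (forall t, u t < 0 -> g t * u t <= du t) -> 0 <= u t1 -> forall t, 0 <= u t.
Proof.
  intros HT Hu Hd Hg Hlow H1 t.
  destruct (periodic_shift_above u T HT Hu t t1) as [t' [Ht' <-]].
  apply (nonneg_preserved u du g t1 t'); auto; lra.
Qed.

Lemma is_derive_at_max_eq0 (f : R -> R) x l : (forall y, f y <= f x) -> is_derive f x l -> l = 0.
Proof.
  intros Hmax Hd. apply is_derive_Reals in Hd.
  rewrite <- (derive_pt_eq_0 f x l (exist _ l Hd) Hd).
  apply (deriv_maximum f (x - 1) (x + 1)); [lra | lra |]. intros y _ _. apply Hmax.
Qed.

Lemma same_side_of_never_eq (f : R -> R) y : (forall t, continuous f t) ->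
  (forall t, f t <> y) -> forall t, 0 < (y - f 0) * (y - f t).
Proof.
  intros Hc Hne t.
  assert (Hcont : continuity f) by (intros x; apply continuity_pt_filterlim, Hc).
  destruct (Rtotal_order (f 0) y) as [H0 | [H0 | H0]]; [| now destruct (Hne 0) |];
  destruct (Rtotal_order (f t) y) as [Ht | [Ht | Ht]]; try (now destruct (Hne t)); try nra;
  destruct (IVT_gen f 0 t y Hcont) as [z [_ Hz]]; try (now destruct (Hne z));
  split; unfold Rmin, Rmax; destruct Rle_dec; lra.
Qed.

(** * Global solutions by Picard iteration *)

Lemma abs_le_pow_of_derive_nonneg (h f : R -> R) C n t : 0 <= t -> h 0 = 0 ->
  (forall u, 0 <= u <= t -> is_derive h u (f u)) ->
  (forall u, 0 <= u <= t -> Rabs (f u) <= C * u ^ n) ->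
  Rabs (h t) <= C * t ^ S n / INR (S n).
Proof.
  intros Ht H0 Hd Hb.
  assert (HS : INR (S n) <> 0) by (apply not_0_INR; lia).
  assert (HP : forall u, is_derive (fun u => C * u ^ S n / INR (S n)) u (C * u ^ n)).
  { intros u. auto_derive; [exact I |].
    change (match n with 0%nat => 1 | S _ => INR n + 1 end) with (INR (S n)). field. exact HS. }
  set (P := fun u => C * u ^ S n / INR (S n)) in HP.
  assert (P0 : P 0 = 0) by (unfold P; simpl; unfold Rdiv; ring).
  assert (Hf : forall u, 0 <= u <= t -> - (C * u ^ n) <= f u <= C * u ^ n)
    by (intros u Hu; apply Rabs_le_between, Hb, Hu).
  pose proof (derive_nonneg_le (fun u => P u + h u) (fun u => C * u ^ n + f u) 0 t Ht) as Hplus.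
  pose proof (derive_nonneg_le (fun u => P u - h u) (fun u => C * u ^ n - f u) 0 t Ht) as Hminus.
  simpl in Hplus, Hminus. rewrite P0, H0 in Hplus, Hminus.
  assert (0 + 0 <= P t + h t).
  { apply Hplus; intros u Hu; [apply (is_derive_plus P h); auto | specialize (Hf u Hu); lra]. }
  assert (0 - 0 <= P t - h t).
  { apply Hminus; intros u Hu; [apply (is_derive_minus P h); auto | specialize (Hf u Hu); lra]. }
  apply Rabs_le. unfold P in *. lra.
Qed.

Lemma abs_le_pow_of_derive (h f : R -> R) C n t : h 0 = 0 ->
  (forall u, Rabs u <= Rabs t -> is_derive h u (f u)) ->
  (forall u, Rabs u <= Rabs t -> Rabs (f u) <= C * Rabs u ^ n) ->
  Rabs (h t) <= C * Rabs t ^ S n / INR (S n).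
Proof.
  intros H0 Hd Hb. destruct (Rle_or_lt 0 t) as [Ht | Ht].
  - rewrite (Rabs_pos_eq t Ht).
    assert (Hu : forall u, 0 <= u <= t -> Rabs u <= Rabs t) by (intros u Hu; rewrite !Rabs_pos_eq; lra).
    apply (abs_le_pow_of_derive_nonneg h f); auto.
    intros u Hu'. rewrite <- (Rabs_pos_eq u) at 2 by lra. auto.
  - rewrite (Rabs_left t Ht), <- Rabs_Ropp, <- (Ropp_involutive t) at 1.
    apply (abs_le_pow_of_derive_nonneg (fun u => - h (- u)) (fun u => f (- u))); [lra | | |].
    + rewrite Ropp_0, H0. apply Ropp_0.
    + intros u Hu. rewrite <- (Ropp_involutive (f (- u))).
      apply (is_derive_opp (fun v => h (- v)) u (- f (- u))).
      replace (- f (- u)) with (scal (-1) (f (- u))) by (unfold scal; simpl; unfold mult; simpl; ring).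
      apply (is_derive_comp h Ropp u).
      * apply Hd. rewrite Rabs_Ropp, Rabs_pos_eq, Rabs_left by lra. lra.
      * auto_derive; [exact I | ring].
    + intros u Hu. replace (u ^ n) with (Rabs (- u) ^ n) by (now rewrite Rabs_Ropp, Rabs_pos_eq by lra).
      apply Hb.
      rewrite Rabs_Ropp, Rabs_pos_eq, Rabs_left by lra. lra.
Qed.

Lemma ex_series_exp_tail x : ex_series (fun n => x ^ S n / INR (fact (S n))).
Proof.
  apply (ex_series_incr_1 (fun n => x ^ n / INR (fact n))).
  exists (exp x). eapply is_series_ext; [| apply (is_exp_Reals x)].
  intros n. simpl. rewrite pow_n_pow. unfold scal; simpl. unfold mult; simpl. unfold Rdiv. ring.
Qed.

Lemma sum_f_R0_increments (u : nat -> R) n :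
  sum_f_R0 (fun k => u (S k) - u k) n = u (S n) - u 0%nat.
Proof. induction n as [| n IH]; simpl; [| rewrite IH]; ring. Qed.

Lemma telescoping_series_error (u a : nat -> R) :
  (forall n, Rabs (u (S n) - u n) <= a n) -> ex_series a ->
  forall n, Rabs (u 0%nat + Series (fun k => u (S k) - u k) - u (S n))
            <= Series (fun k => a (S n + k)%nat).
Proof.
  intros Hu Ha n.
  assert (Hd : ex_series (fun k => u (S k) - u k))
    by (apply (ex_series_le (V := R_CompleteNormedModule) _ a); auto).
  rewrite (Series_incr_n _ (S n)), sum_f_R0_increments by (auto || lia). simpl pred.
  replace (u 0%nat + (u (S n) - u 0%nat + Series (fun k => u (S (S n + k)) - u (S n + k)%nat))
           - u (S n))
    with (Series (fun k => u (S (S n + k)) - u (S n + k)%nat)) by ring.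
  assert (Ha' : ex_series (fun k => a (S n + k)%nat)) by now apply ex_series_incr_n.
  eapply Rle_trans; [apply Series_Rabs | apply Series_le]; auto.
  - apply (ex_series_le (V := R_CompleteNormedModule) _ (fun k => a (S n + k)%nat)); auto.
    intros k. rewrite Rabs_Rabsolu. apply Hu.
  - intros k. split; [apply Rabs_pos | apply Hu].
Qed.

Lemma Series_eq0 (a : nat -> R) : (forall k, a k = 0) -> Series a = 0.
Proof.
  intros Ha. rewrite (Series_ext a (fun k => 0 * 0)) by (intros; rewrite Ha; ring).
  rewrite Series_scal_l. ring.
Qed.

Lemma series_tail_cv (a : nat -> R) : ex_series a ->
  is_lim_seq (fun n => Series (fun k => a (S n + k)%nat)) 0.
Proof.
  intros Ha.
  apply (is_lim_seq_ext (fun n => Series a - sum_f_R0 a n)).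
  - intros n. rewrite (Series_incr_n a (S n)) by (auto || lia). simpl pred. ring.
  - replace (Finite 0) with (Rbar_minus (Series a) (Series a)) by (simpl; f_equal; ring).
    apply is_lim_seq_minus'; [apply is_lim_seq_const |].
    apply (is_lim_seq_ext (sum_n a)); [intros; apply sum_n_Reals |].
    apply Series_correct, Ha.
Qed.

Lemma is_derive_uniform_limit (u du : nat -> R -> R) (g dg : R -> R) L t : Rabs t < L ->
  (forall n y, Rabs y < L -> is_derive (u n) y (du n y)) ->
  (forall eps, 0 < eps -> exists N, forall n y, (N <= n)%nat -> Rabs y < L ->
     Rabs (g y - u n y) < eps) ->
  (forall eps, 0 < eps -> exists N, forall n y, (N <= n)%nat -> Rabs y < L ->
     Rabs (dg y - du n y) < eps) ->
  is_derive g t (dg t).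
Proof.
  intros Ht Hd Hu Hdu. assert (HL : 0 < L) by (pose proof (Rabs_pos t); lra).
  assert (Hball : forall y, Boule 0 (mkposreal L HL) y <-> Rabs y < L)
    by (intros y; unfold Boule; simpl; rewrite Rminus_0_r; tauto).
  apply is_derive_Reals, (CVU_derivable u du g dg 0 (mkposreal L HL)); [| | | now apply Hball].
  - intros eps Heps. destruct (Hdu eps Heps) as [N HN].
    exists N. intros n y Hn Hy. apply HN, Hball; auto.
  - intros y Hy eps Heps. destruct (Hu eps Heps) as [N HN].
    exists N. intros n Hn. unfold R_dist. rewrite Rabs_minus_sym. apply HN, Hball; auto.
  - intros n y Hy. apply is_derive_Reals, Hd, Hball, Hy.
Qed.

Lemma is_derive_RInt_0 (g : R -> R) a t : (forall x, continuous g x) ->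
  is_derive (fun t => a + RInt g 0 t) t (g t).
Proof.
  intros Hg.
  assert (HI : is_derive (fun t => RInt g 0 t) t (g t)).
  { apply (is_derive_RInt g _ 0); [| auto].
    apply filter_forall. intros b. apply (RInt_correct (V := R_CompleteNormedModule)).
    apply (ex_RInt_continuous (V := R_CompleteNormedModule)). intros; auto. }
  pose proof (is_derive_plus (fun _ => a) _ t _ _ (is_derive_const a t) HI) as H.
  simpl in H. unfold plus, zero in H; simpl in H. now rewrite Rplus_0_l in H.
Qed.

Section Picard.

Variables (F G : R -> R -> R -> R) (B K : R -> R) (x0 y0 : R).

Hypothesis F_comp_continuous : forall (a b : R -> R) t,
  continuous a t -> continuous b t -> continuous (fun u => F u (a u) (b u)) t.
Hypothesis G_comp_continuous : forall (a b : R -> R) t,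
  continuous a t -> continuous b t -> continuous (fun u => G u (a u) (b u)) t.
Hypothesis K_pos : forall L, 0 <= L -> 0 < K L.
Hypothesis FG_bounded : forall L t x y, Rabs t <= L ->
  Rabs (F t x y) <= B L /\ Rabs (G t x y) <= B L.
Hypothesis FG_lipschitz : forall L t x y x' y', Rabs t <= L ->
  Rabs (F t x y - F t x' y') <= K L * (Rabs (x - x') + Rabs (y - y')) /\
  Rabs (G t x y - G t x' y') <= K L * (Rabs (x - x') + Rabs (y - y')).

Fixpoint picard (n : nat) : (R -> R) * (R -> R) :=
  match n with
  | O => (fun _ => x0, fun _ => y0)
  | S n => let p := picard n in
      (fun t => x0 + RInt (fun u => F u (fst p u) (snd p u)) 0 t,
       fun t => y0 + RInt (fun u => G u (fst p u) (snd p u)) 0 t)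
  end.

Local Notation px n := (fst (picard n)).
Local Notation py n := (snd (picard n)).

Lemma picard_continuous n t : continuous (px n) t /\ continuous (py n) t.
Proof.
  revert t. induction n as [| n IH]; intros t; [split; apply continuous_const |].
  split; eapply is_derive_continuous, is_derive_RInt_0; intros u; destruct (IH u);
    [apply F_comp_continuous | apply G_comp_continuous]; auto.
Qed.

Lemma picard_is_derive n t :
  is_derive (px (S n)) t (F t (px n t) (py n t)) /\
  is_derive (py (S n)) t (G t (px n t) (py n t)).
Proof.
  split; [apply (is_derive_RInt_0 (fun u => F u (px n u) (py n u)))
         | apply (is_derive_RInt_0 (fun u => G u (px n u) (py n u)))];
    intros u; destruct (picard_continuous n u);
    [apply F_comp_continuous | apply G_comp_continuous]; auto.
Qed.

Lemma picard_at_0 n : px n 0 = x0 /\ py n 0 = y0.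
Proof. destruct n; simpl; [auto | rewrite !RInt_point; split; apply Rplus_0_r]. Qed.

Lemma picard_first_step_bound L t : Rabs t <= L ->
  Rabs (px 1 t - px 0 t) <= B L * Rabs t ^ 1 / INR 1 /\
  Rabs (py 1 t - py 0 t) <= B L * Rabs t ^ 1 / INR 1.
Proof.
  intros Ht. destruct (picard_at_0 1) as [Hx1 Hy1].
  split; [apply (abs_le_pow_of_derive (fun t => px 1 t - x0) (fun u => F u x0 y0))
         | apply (abs_le_pow_of_derive (fun t => py 1 t - y0) (fun u => G u x0 y0))];
    try (intros u Hu; rewrite pow_O, Rmult_1_r; apply FG_bounded; lra);
    try (now rewrite ?Hx1, ?Hy1, Rminus_diag);
    intros u _; eapply is_derive_eq; try apply Rminus_0_r;
    apply is_derive_minus_R; try apply (is_derive_const (V := R_NormedModule));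
    apply (picard_is_derive 0 u).
Qed.

Lemma picard_increment_is_derive n u :
  is_derive (fun t => px (S (S n)) t - px (S n) t) u
    (F u (px (S n) u) (py (S n) u) - F u (px n u) (py n u)) /\
  is_derive (fun t => py (S (S n)) t - py (S n) t) u
    (G u (px (S n) u) (py (S n) u) - G u (px n u) (py n u)).
Proof.
  destruct (picard_is_derive (S n) u), (picard_is_derive n u).
  split; apply is_derive_minus_R; assumption.
Qed.

Lemma picard_step_bound L n t : Rabs t <= L ->
  Rabs (px (S n) t - px n t) + Rabs (py (S n) t - py n t)
  <= B L / K L * (2 * K L * Rabs t) ^ S n / INR (fact (S n)).
Proof.
  intros Ht. pose proof (K_pos L ltac:(pose proof (Rabs_pos t); lra)) as HK. revert t Ht.
  induction n as [| n IH]; intros t Ht.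
  { destruct (picard_first_step_bound L t Ht).
    replace (B L / K L * (2 * K L * Rabs t) ^ 1 / INR (fact 1))
      with (2 * (B L * Rabs t ^ 1 / INR 1)) by (simpl; field; lra).
    lra. }
  set (C := B L * (2 * K L) ^ S n / INR (fact (S n))).
  assert (Hb : forall u, Rabs u <= Rabs t ->
    Rabs (F u (px (S n) u) (py (S n) u) - F u (px n u) (py n u)) <= C * Rabs u ^ S n /\
    Rabs (G u (px (S n) u) (py (S n) u) - G u (px n u) (py n u)) <= C * Rabs u ^ S n).
  { intros u Hu.
    destruct (FG_lipschitz L u (px (S n) u) (py (S n) u) (px n u) (py n u)) as [Lx Ly]; [lra |].
    assert (K L * (Rabs (px (S n) u - px n u) + Rabs (py (S n) u - py n u)) <= C * Rabs u ^ S n).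
    { eapply Rle_trans; [apply Rmult_le_compat_l; [lra | apply IH; lra] |].
      right. unfold C. rewrite Rpow_mult_distr. field. split; [apply INR_fact_neq_0 | lra]. }
    split; lra. }
  destruct (picard_at_0 (S (S n))) as [Hx2 Hy2]. destruct (picard_at_0 (S n)) as [Hx1 Hy1].
  assert (Hx : Rabs (px (S (S n)) t - px (S n) t) <= C * Rabs t ^ S (S n) / INR (S (S n))).
  { apply (abs_le_pow_of_derive (fun t => px (S (S n)) t - px (S n) t)
           (fun u => F u (px (S n) u) (py (S n) u) - F u (px n u) (py n u)));
      [now rewrite Hx2, Hx1, Rminus_diag | intros u _; apply picard_increment_is_derive | apply Hb]. }
  assert (Hy : Rabs (py (S (S n)) t - py (S n) t) <= C * Rabs t ^ S (S n) / INR (S (S n))).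
  { apply (abs_le_pow_of_derive (fun t => py (S (S n)) t - py (S n) t)
           (fun u => G u (px (S n) u) (py (S n) u) - G u (px n u) (py n u)));
      [now rewrite Hy2, Hy1, Rminus_diag | intros u _; apply picard_increment_is_derive | apply Hb]. }
  replace (B L / K L * (2 * K L * Rabs t) ^ S (S n) / INR (fact (S (S n))))
    with (2 * (C * Rabs t ^ S (S n) / INR (S (S n)))); [lra |].
  unfold C. rewrite !Rpow_mult_distr, (fact_simpl (S n)), mult_INR. simpl pow.
  field. repeat split; first [apply INR_fact_neq_0 | apply not_0_INR; lia | lra].
Qed.

Definition picard_lim_x (t : R) : R := x0 + Series (fun k => px (S k) t - px k t).
Definition picard_lim_y (t : R) : R := y0 + Series (fun k => py (S k) t - py k t).

Lemma picard_uniform_cv L : 0 <= L -> forall eps, 0 < eps ->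
  exists N, forall n y, (N <= n)%nat -> Rabs y <= L ->
    Rabs (picard_lim_x y - px n y) + Rabs (picard_lim_y y - py n y) < eps.
Proof.
  intros HL eps Heps. pose proof (K_pos L HL) as HK.
  assert (HB : 0 <= B L).
  { destruct (FG_bounded L 0 x0 y0) as [Hb _]; [rewrite Rabs_R0; lra |].
    pose proof (Rabs_pos (F 0 x0 y0)). lra. }
  set (a k := B L / K L * (2 * K L * L) ^ S k / INR (fact (S k))).
  assert (Ha : ex_series a).
  { apply (ex_series_ext (fun k => scal (B L / K L) ((2 * K L * L) ^ S k / INR (fact (S k))))).
    - intros k. unfold a, scal; simpl. unfold mult; simpl. unfold Rdiv. ring.
    - apply (ex_series_scal_l (V := R_NormedModule)), ex_series_exp_tail. }
  assert (Hstep : forall k y, Rabs y <= L ->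
            Rabs (px (S k) y - px k y) <= a k /\ Rabs (py (S k) y - py k y) <= a k).
  { intros k y Hy. pose proof (picard_step_bound L k y Hy) as Hk.
    assert (B L / K L * (2 * K L * Rabs y) ^ S k / INR (fact (S k)) <= a k).
    { unfold a, Rdiv. apply Rmult_le_compat_r; [left; apply Rinv_0_lt_compat, INR_fact_lt_0 |].
      apply Rmult_le_compat_l; [apply Rmult_le_pos; [lra | left; apply Rinv_0_lt_compat, HK] |].
      apply pow_incr. pose proof (Rabs_pos y). split; nra. }
    pose proof (Rabs_pos (px (S k) y - px k y)). pose proof (Rabs_pos (py (S k) y - py k y)). lra. }
  destruct (proj2 (is_lim_seq_spec _ _) (series_tail_cv a Ha) (mkposreal (eps / 2) ltac:(lra)))
    as [N0 HN0].
  exists (S N0). intros [| m] y Hm Hy; [lia |].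
  pose proof (HN0 m ltac:(lia)) as Htail. simpl in Htail. rewrite Rminus_0_r in Htail.
  pose proof (telescoping_series_error (fun k => px k y) a (fun k => proj1 (Hstep k y Hy)) Ha m) as Ex.
  pose proof (telescoping_series_error (fun k => py k y) a (fun k => proj2 (Hstep k y Hy)) Ha m) as Ey.
  unfold picard_lim_x, picard_lim_y. simpl in Ex, Ey |- *.
  pose proof (Rle_abs (Series (fun k => a (S (m + k))))). lra.
Qed.

Lemma picard_lim_at_0 : picard_lim_x 0 = x0 /\ picard_lim_y 0 = y0.
Proof.
  unfold picard_lim_x, picard_lim_y. rewrite !Series_eq0; [split; ring | |]; intros k.
  - now rewrite (proj2 (picard_at_0 (S k))), (proj2 (picard_at_0 k)), Rminus_diag.
  - now rewrite (proj1 (picard_at_0 (S k))), (proj1 (picard_at_0 k)), Rminus_diag.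
Qed.

Lemma picard_lim_is_derive t :
  is_derive picard_lim_x t (F t (picard_lim_x t) (picard_lim_y t)) /\
  is_derive picard_lim_y t (G t (picard_lim_x t) (picard_lim_y t)).
Proof.
  set (L := Rabs t + 1).
  assert (HL : 0 <= L) by (pose proof (Rabs_pos t); unfold L; lra).
  pose proof (K_pos L HL) as HK. pose proof (picard_uniform_cv L HL) as Hcv.
  assert (Hu : forall eps, 0 < eps -> exists N, forall n y, (N <= n)%nat -> Rabs y < L ->
            Rabs (picard_lim_x y - px (S n) y) < eps /\ Rabs (picard_lim_y y - py (S n) y) < eps).
  { intros eps Heps. destruct (Hcv eps Heps) as [N HN]. exists N. intros n y Hn Hy.
    specialize (HN (S n) y ltac:(lia) ltac:(lra)).
    pose proof (Rabs_pos (picard_lim_x y - px (S n) y)).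
    pose proof (Rabs_pos (picard_lim_y y - py (S n) y)). lra. }
  assert (Hdu : forall eps, 0 < eps -> exists N, forall n y, (N <= n)%nat -> Rabs y < L ->
    Rabs (F y (picard_lim_x y) (picard_lim_y y) - F y (px n y) (py n y)) < eps /\
    Rabs (G y (picard_lim_x y) (picard_lim_y y) - G y (px n y) (py n y)) < eps).
  { intros eps Heps. destruct (Hcv (eps / K L)) as [N HN]; [apply Rdiv_lt_0_compat; lra |].
    exists N. intros n y Hn Hy. specialize (HN n y Hn ltac:(lra)).
    apply (Rmult_lt_compat_l (K L)) in HN; [| lra].
    replace (K L * (eps / K L)) with eps in HN by (field; lra).
    destruct (FG_lipschitz L y (picard_lim_x y) (picard_lim_y y) (px n y) (py n y)); [lra |].
    split; lra. }
  split; [apply (is_derive_uniform_limit (fun n => px (S n)) (fun n y => F y (px n y) (py n y))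
           picard_lim_x (fun y => F y (picard_lim_x y) (picard_lim_y y)) L)
         | apply (is_derive_uniform_limit (fun n => py (S n)) (fun n y => G y (px n y) (py n y))
           picard_lim_y (fun y => G y (picard_lim_x y) (picard_lim_y y)) L)];
    try (unfold L; lra); try (intros n y _; apply picard_is_derive);
    intros eps Heps; [destruct (Hu eps Heps) as [N HN] | destruct (Hdu eps Heps) as [N HN]
                     | destruct (Hu eps Heps) as [N HN] | destruct (Hdu eps Heps) as [N HN]];
    exists N; intros n y Hn Hy; apply (HN n y Hn Hy).
Qed.

Theorem picard_global_solution : exists x y : R -> R, x 0 = x0 /\ y 0 = y0 /\
  forall t, is_derive x t (F t (x t) (y t)) /\ is_derive y t (G t (x t) (y t)).
Proof.
  exists picard_lim_x, picard_lim_y.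
  destruct picard_lim_at_0. repeat split; auto; apply picard_lim_is_derive.
Qed.

End Picard.

(** * Stationary points *)

Lemma infinite_set_of_unbounded (P : R * R -> Prop) :
  (forall M, exists p, P p /\ M < fst p) -> infinite_set P.
Proof.
  intros Hunb [l Hl].
  assert (Hbound : exists M, forall p, In p l -> fst p <= M).
  { clear Hl. induction l as [| q l [M HM]]; [exists 0; intros p [] |].
    exists (Rmax (fst q) M). intros p [<- | Hp]; [apply Rmax_l |].
    eapply Rle_trans; [apply HM, Hp | apply Rmax_r]. }
  destruct Hbound as [M HM]. destruct (Hunb M) as [p [Hp HpM]].
  specialize (HM p (Hl p Hp)). lra.
Qed.

Definition degenerate_parameters (k0 k1 k2 eT : R) : Prop :=
  (k0 = 0 /\ k1 = 0) \/ (k0 = 0 /\ eT = 0) \/ (k0 = 0 /\ k2 = 0).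

Section Stationary.

Variables (k0 k1 km1 k2 eT : R).
Hypotheses (h1 : 0 <= k1) (hm1 : 0 <= km1) (h2 : 0 <= k2).

Local Notation stat := (stationary k0 k1 km1 k2 eT).

Lemma stationary_iff s c : stat (s, c) <-> k0 = k2 * c /\ k1 * (eT - c) * s = (km1 + k2) * c.
Proof. unfold stationary, fs, fc; simpl. split; intros [E1 E2]; split; lra. Qed.

Lemma stationary_qss_curve x : 0 < x -> degenerate_parameters k0 k1 k2 eT ->
  stat (x, k1 * eT * x / (km1 + k1 * x)).
Proof.
  intros Hx Hdeg. apply stationary_iff.
  destruct Hdeg as [[-> ->] | [[-> ->] | [-> ->]]]; unfold Rdiv.
  - rewrite !Rmult_0_l. split; ring.
  - rewrite !Rmult_0_r, !Rmult_0_l. split; ring.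
  - split; [ring |].
    destruct (Req_dec (km1 + k1 * x) 0) as [E | E].
    + assert (k1 = 0) by nra. assert (km1 = 0) by nra. subst. ring.
    + field. exact E.
Qed.

Lemma stationary_unbounded : degenerate_parameters k0 k1 k2 eT ->
  forall M, exists p, stat p /\ M < fst p.
Proof.
  intros Hdeg M. exists (Rmax M 0 + 1, k1 * eT * (Rmax M 0 + 1) / (km1 + k1 * (Rmax M 0 + 1))).
  pose proof (Rmax_l M 0). pose proof (Rmax_r M 0).
  split; [apply stationary_qss_curve; auto; lra | simpl; lra].
Qed.

Lemma stationary_eq_P0 p : ~ degenerate_parameters k0 k1 k2 eT -> stat p ->
  k1 <> 0 /\ k2 <> 0 /\ k2 * eT - k0 <> 0 /\ p = P0 k0 k1 km1 k2 eT.
Proof.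
  intros Hnd. destruct p as [s c]. intros [E1 E2]%stationary_iff.
  assert (Hk2 : k2 <> 0) by (intros ->; apply Hnd; right; right; split; lra).
  assert (Hc : c = k0 / k2) by (rewrite E1; field; exact Hk2).
  assert (HeT : eT - c = (k2 * eT - k0) / k2) by (rewrite Hc; field; exact Hk2).
  assert (Hne : k1 * (eT - c) <> 0).
  { intros Z. rewrite Z, Rmult_0_l in E2. assert (c = 0) by nra.
    apply Hnd. destruct (Rmult_integral _ _ Z); [left | right; left]; split; nra. }
  assert (Hk1 : k1 <> 0) by (intros ->; apply Hne; ring).
  assert (HD : k2 * eT - k0 <> 0) by (intros HD; apply Hne; rewrite HeT, HD; unfold Rdiv; ring).
  repeat split; auto. unfold P0. f_equal; [| exact Hc].
  apply (Rmult_eq_reg_l (k1 * (eT - c))); [| exact Hne].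
  rewrite E2, HeT, Hc. field. auto.
Qed.

Lemma P0_stationary : k1 <> 0 -> k2 <> 0 -> k2 * eT - k0 <> 0 -> stat (P0 k0 k1 km1 k2 eT).
Proof. intros. apply stationary_iff. split; field; auto. Qed.

Lemma degenerate_parameters_nonzero : k1 <> 0 -> k2 <> 0 -> k2 * eT - k0 <> 0 ->
  ~ degenerate_parameters k0 k1 k2 eT.
Proof.
  intros H1 H2 HD [[-> E] | [[-> E] | [-> E]]]; [apply H1 | apply HD; rewrite E; ring | apply H2];
    exact E.
Qed.

Lemma infinite_stationary_iff :
  infinite_set stat <-> degenerate_parameters k0 k1 k2 eT.
Proof.
  split.
  - intros Hinf. apply NNPP. intros Hnd. apply Hinf.
    exists (P0 k0 k1 km1 k2 eT :: nil). intros p Hp.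
    left. symmetry. apply (stationary_eq_P0 p Hnd Hp).
  - intros Hdeg. apply infinite_set_of_unbounded, stationary_unbounded, Hdeg.
Qed.

Lemma finite_stationary_cases : ~ infinite_set stat ->
  ~ (exists p, stat p) \/ (exists! p, stat p).
Proof.
  intros Hfin. assert (Hnd : ~ degenerate_parameters k0 k1 k2 eT)
    by (intros Hdeg; apply Hfin, infinite_stationary_iff, Hdeg).
  destruct (classic (exists p, stat p)) as [[p Hp] | Hnone]; [right | left; exact Hnone].
  exists p. split; [exact Hp |]. intros q Hq.
  rewrite (proj2 (proj2 (proj2 (stationary_eq_P0 p Hnd Hp)))).
  symmetry. apply (stationary_eq_P0 q Hnd Hq).
Qed.

Lemma unique_stationary_iff :
  (exists! p, stat p) <-> k1 <> 0 /\ k2 <> 0 /\ k2 * eT - k0 <> 0.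
Proof.
  split.
  - intros [p [Hp Huniq]].
    assert (Hnd : ~ degenerate_parameters k0 k1 k2 eT).
    { intros Hdeg.
      pose proof (Huniq _ (stationary_qss_curve 1 ltac:(lra) Hdeg)) as E1.
      pose proof (Huniq _ (stationary_qss_curve 2 ltac:(lra) Hdeg)) as E2.
      rewrite E1 in E2. injection E2. lra. }
    destruct (stationary_eq_P0 p Hnd Hp) as (? & ? & ? & _). auto.
  - intros (Hk1 & Hk2 & HD). exists (P0 k0 k1 km1 k2 eT).
    split; [apply P0_stationary; auto |]. intros q Hq.
    symmetry. apply (stationary_eq_P0 q (degenerate_parameters_nonzero Hk1 Hk2 HD) Hq).
Qed.

End Stationary.

(** * Linearization at P0 *)

Lemma eigenvalues2_discriminant a b c d : 0 <= (a + d) ^ 2 - 4 * (a * d - b * c) ->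
  let q := sqrt ((a + d) ^ 2 - 4 * (a * d - b * c)) in
  eigenvalues2 a b c d ((a + d - q) / 2) ((a + d + q) / 2).
Proof.
  intros Hdisc q x. assert (Hq : q * q = (a + d) ^ 2 - 4 * (a * d - b * c)) by (apply sqrt_sqrt; lra).
  field_simplify. replace (q ^ 2) with (q * q) by ring. rewrite Hq. field.
Qed.

Lemma eigenvalues2_neg a b c d : a + d < 0 -> 0 < a * d - b * c ->
  0 <= (a + d) ^ 2 - 4 * (a * d - b * c) ->
  exists l1 l2, l1 < 0 /\ l2 < 0 /\ eigenvalues2 a b c d l1 l2.
Proof.
  intros Htr Hdet Hdisc. pose proof (eigenvalues2_discriminant a b c d Hdisc) as He. simpl in He.
  set (q := sqrt _) in He.
  assert (Hq : q * q = (a + d) ^ 2 - 4 * (a * d - b * c)) by (apply sqrt_sqrt; lra).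
  assert (Hq0 : 0 <= q) by apply sqrt_pos.
  assert (q < - (a + d)).
  { apply Rsqr_incrst_0; [unfold Rsqr; rewrite Hq | lra | lra].
    replace (- (a + d) * - (a + d)) with ((a + d) ^ 2) by ring. lra. }
  exists ((a + d - q) / 2), ((a + d + q) / 2). repeat split; [lra | lra | exact He].
Qed.

Lemma eigenvalues2_opposite_signs a b c d : a * d - b * c < 0 ->
  exists l1 l2, l1 < 0 /\ 0 < l2 /\ eigenvalues2 a b c d l1 l2.
Proof.
  intros Hdet. assert (Hdisc : 0 <= (a + d) ^ 2 - 4 * (a * d - b * c))
    by (pose proof (pow2_ge_0 (a + d)); lra).
  pose proof (eigenvalues2_discriminant a b c d Hdisc) as He. simpl in He.
  set (q := sqrt _) in He.
  assert (Hq : q * q = (a + d) ^ 2 - 4 * (a * d - b * c)) by (apply sqrt_sqrt; lra).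
  assert (Hq0 : 0 <= q) by apply sqrt_pos.
  exists ((a + d - q) / 2), ((a + d + q) / 2). repeat split; [nra | nra | exact He].
Qed.

Section Linearization.

Variables (k0 k1 km1 k2 eT : R).
Hypotheses (h0 : 0 <= k0) (h1 : 0 <= k1) (hm1 : 0 <= km1) (h2 : 0 <= k2) (hT : 0 <= eT).
Hypotheses (Hk1 : k1 <> 0) (Hk2 : k2 <> 0) (HD : k2 * eT - k0 <> 0).

Lemma jacobian_eq p :
  jac11 k0 k1 km1 k2 eT p = - (k1 * (eT - snd p)) /\
  jac12 k0 k1 km1 k2 eT p = k1 * fst p + km1 /\
  jac21 k0 k1 km1 k2 eT p = k1 * (eT - snd p) /\
  jac22 k0 k1 km1 k2 eT p = - (k1 * fst p) - (km1 + k2).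
Proof.
  destruct p as [s c]. unfold jac11, jac12, jac21, jac22, fs, fc; simpl.
  repeat split; apply is_derive_unique; auto_derive; auto; ring.
Qed.

Local Notation D := (k2 * eT - k0).
Local Notation s0 := (fst (P0 k0 k1 km1 k2 eT)).
Local Notation c0 := (snd (P0 k0 k1 km1 k2 eT)).

Lemma P0_s_sign : (0 < D -> 0 <= s0) /\ (D < 0 -> s0 < 0).
Proof.
  simpl. split; intros HDs.
  - apply Rdiv_le_0_compat; [apply Rmult_le_pos | apply Rmult_lt_0_compat]; lra.
  - assert (0 < k0) by (pose proof (Rmult_le_pos k2 eT h2 hT); lra).
    replace ((km1 + k2) * k0 / (k1 * D)) with (- ((km1 + k2) * k0 / (k1 * - D))) by (field; lra).
    assert (0 < (km1 + k2) * k0 / (k1 * - D)); [| lra].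
    apply Rdiv_lt_0_compat; [apply Rmult_lt_0_compat | apply Rmult_lt_0_compat]; lra.
Qed.

Lemma P0_first_quadrant_iff : first_quadrant (P0 k0 k1 km1 k2 eT) <-> D > 0.
Proof.
  destruct P0_s_sign as [Hpos Hneg]. unfold first_quadrant.
  assert (0 <= c0) by (simpl; apply Rdiv_le_0_compat; lra).
  split; [intros [Hs _]; destruct (Rtotal_order D 0) as [HD' | [HD' | HD']];
           [specialize (Hneg HD') | |]; lra |].
  intros HDs. split; [apply Hpos |]; lra.
Qed.

Lemma P0_second_quadrant_iff : second_quadrant (P0 k0 k1 km1 k2 eT) <-> D < 0.
Proof.
  destruct P0_s_sign as [Hpos Hneg]. unfold second_quadrant.
  split; [intros [Hs _]; destruct (Rtotal_order D 0) as [HD' | [HD' | HD']];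
           [| | specialize (Hpos HD')]; lra |].
  intros HDs. split; [apply Hneg, HDs |]. simpl. apply Rdiv_lt_0_compat; nra.
Qed.

Lemma P0_jacobian_det :
  let a := k1 * (eT - c0) in
  a = k1 * D / k2 /\
  (- a) * (- (k1 * s0) - (km1 + k2)) - (k1 * s0 + km1) * a = a * k2.
Proof. simpl. split; [field; exact Hk2 | ring]. Qed.

Lemma P0_attracting_node : D > 0 -> attracting_node k0 k1 km1 k2 eT (P0 k0 k1 km1 k2 eT).
Proof.
  intros HDs. unfold attracting_node.
  destruct (jacobian_eq (P0 k0 k1 km1 k2 eT)) as (-> & -> & -> & ->).
  destruct P0_jacobian_det as [Ea Edet]. set (a := k1 * (eT - c0)) in *.
  assert (Ha : 0 < a) by (rewrite Ea; apply Rdiv_lt_0_compat; [apply Rmult_lt_0_compat |]; lra).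
  assert (Hb : 0 <= k1 * s0 + km1) by (pose proof (proj1 P0_s_sign HDs); nra).
  apply eigenvalues2_neg; rewrite ?Edet; [lra | nra |].
  replace ((- a + (- (k1 * s0) - (km1 + k2))) ^ 2 - 4 * (a * k2))
    with ((a - k2) ^ 2 + (k1 * s0 + km1) ^ 2 + 2 * ((k1 * s0 + km1) * (a + k2))) by ring.
  pose proof (pow2_ge_0 (a - k2)). pose proof (pow2_ge_0 (k1 * s0 + km1)). nra.
Qed.

Lemma P0_saddle_point : D < 0 -> saddle_point k0 k1 km1 k2 eT (P0 k0 k1 km1 k2 eT).
Proof.
  intros HDs. unfold saddle_point.
  destruct (jacobian_eq (P0 k0 k1 km1 k2 eT)) as (-> & -> & -> & ->).
  destruct P0_jacobian_det as [Ea Edet]. apply eigenvalues2_opposite_signs. rewrite Edet, Ea.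
  replace (k1 * D / k2 * k2) with (k1 * D) by (field; exact Hk2). nra.
Qed.

End Linearization.

(** * Invariance and global existence *)

Definition clip (m x : R) : R := Rmax 0 (Rmin m x).

Lemma clip_id m x : 0 <= x <= m -> clip m x = x.
Proof. intros Hx. unfold clip. rewrite Rmin_right, Rmax_right; lra. Qed.

Lemma clip_nonpos m x : 0 <= m -> x <= 0 -> clip m x = 0.
Proof. intros Hm Hx. unfold clip. rewrite Rmin_right, Rmax_left; lra. Qed.

Lemma clip_range m x : 0 <= m -> 0 <= clip m x <= m.
Proof. intros Hm. unfold clip, Rmax, Rmin. repeat destruct Rle_dec; lra. Qed.

Lemma clip_monotone m x y : x <= y -> 0 <= clip m y - clip m x <= y - x.
Proof. intros Hxy. unfold clip, Rmax, Rmin. repeat destruct Rle_dec; lra. Qed.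

Lemma clip_lipschitz m x y : Rabs (clip m x - clip m y) <= Rabs (x - y).
Proof.
  destruct (Rle_or_lt x y) as [Hxy | Hxy].
  - pose proof (clip_monotone m x y Hxy). rewrite Rabs_minus_sym, (Rabs_minus_sym x).
    rewrite !Rabs_pos_eq; lra.
  - pose proof (clip_monotone m y x ltac:(lra)). rewrite !Rabs_pos_eq; lra.
Qed.

Lemma clip_Rabs m x :
  clip m x = ((m + x - Rabs (m - x)) / 2 + Rabs ((m + x - Rabs (m - x)) / 2)) / 2.
Proof.
  assert (Hmin : Rmin m x = (m + x - Rabs (m - x)) / 2)
    by (unfold Rmin, Rabs; destruct Rle_dec, Rcase_abs; lra).
  unfold clip. rewrite <- Hmin. generalize (Rmin m x). intros r.
  unfold Rmax, Rabs. destruct Rle_dec, Rcase_abs; lra.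
Qed.

Lemma continuous_clip (m f : R -> R) t : continuous m t -> continuous f t ->
  continuous (fun u => clip (m u) (f u)) t.
Proof.
  intros Hm Hf. apply (continuous_ext (fun u => ((m u + f u - Rabs (m u - f u)) / 2
                     + Rabs ((m u + f u - Rabs (m u - f u)) / 2)) / 2)).
  - intros u. symmetry. apply clip_Rabs.
  - continuity_R.
Qed.

Lemma scaled_abs_le c x M d : 0 <= c <= M -> Rabs x <= d -> - (M * d) <= c * x <= M * d.
Proof.
  intros Hc Hx. apply Rabs_le_between. rewrite Rabs_mult, Rabs_pos_eq by lra.
  apply Rmult_le_compat; auto using Rabs_pos; lra.
Qed.

Section Dynamics.

Variables (k0 k1 km1 k2 eT : R).
Hypotheses (h0 : 0 <= k0) (h1 : 0 <= k1) (hm1 : 0 <= km1) (h2 : 0 <= k2) (hT : 0 <= eT).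

Local Notation F := (fs k0 k1 km1 k2 eT).
Local Notation G := (fc k0 k1 km1 k2 eT).
Local Notation solution_on := (is_solution_on k0 k1 km1 k2 eT).

Lemma solution_continuous (s c : R -> R) (I : R -> Prop) t : solution_on s c I -> I t ->
  continuous s t /\ continuous c t.
Proof. intros Hsol It. destruct (Hsol t It). split; eapply is_derive_continuous; eauto. Qed.

Lemma quadrant_negsq_ineq s c :
  2 * Rmin s 0 * F s c + 2 * Rmin c 0 * G s c
  <= (2 * k1 * (Rabs (eT - c) + Rabs s) + km1 + k1 * eT) * (negsq s + negsq c).
Proof.
  unfold negsq, fs, fc. set (ms := Rmin s 0). set (mc := Rmin c 0).
  assert (Hm : ms <= 0 /\ mc <= 0 /\ s * ms = ms ^ 2 /\ c * mc = mc ^ 2 /\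
               c * ms <= mc * ms /\ s * mc <= ms * mc)
    by (unfold ms, mc, Rmin; destruct (Rle_dec s 0), (Rle_dec c 0); repeat split; nra).
  destruct Hm as (Hms & Hmc & Es & Ec & Hcs & Hsc).
  pose proof (Rle_abs (- (eT - c))) as Ha. pose proof (Rle_abs (- s)) as Hb.
  rewrite Rabs_Ropp in Ha, Hb.
  assert (Hcross : 2 * (ms * mc) <= ms ^ 2 + mc ^ 2) by (pose proof (pow2_ge_0 (ms - mc)); nra).
  assert (T1 : 2 * ms * k0 <= 0) by nra.
  assert (T2 : - 2 * k1 * (eT - c) * (s * ms) <= 2 * k1 * Rabs (eT - c) * ms ^ 2).
  { rewrite Es. replace (- 2 * k1 * (eT - c) * ms ^ 2) with (- (eT - c) * (2 * k1 * ms ^ 2)) by ring.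
    replace (2 * k1 * Rabs (eT - c) * ms ^ 2) with (Rabs (eT - c) * (2 * k1 * ms ^ 2)) by ring.
    apply Rmult_le_compat_r; [pose proof (pow2_ge_0 ms); nra | exact Ha]. }
  assert (T3 : 2 * km1 * (c * ms) <= km1 * (ms ^ 2 + mc ^ 2)) by nra.
  assert (T4 : 2 * k1 * eT * (s * mc) <= k1 * eT * (ms ^ 2 + mc ^ 2))
    by (assert (0 <= k1 * eT) by nra; nra).
  assert (T5 : - 2 * k1 * s * (c * mc) <= 2 * k1 * Rabs s * mc ^ 2).
  { rewrite Ec. replace (- 2 * k1 * s * mc ^ 2) with (- s * (2 * k1 * mc ^ 2)) by ring.
    replace (2 * k1 * Rabs s * mc ^ 2) with (Rabs s * (2 * k1 * mc ^ 2)) by ring.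
    apply Rmult_le_compat_r; [pose proof (pow2_ge_0 mc); nra | exact Hb]. }
  assert (T6 : - 2 * (km1 + k2) * (c * mc) <= 0) by (rewrite Ec; pose proof (pow2_ge_0 mc); nra).
  assert (0 <= k1 * Rabs (eT - c) * mc ^ 2)
    by (apply Rmult_le_pos; [apply Rmult_le_pos; [lra | apply Rabs_pos] | apply pow2_ge_0]).
  assert (0 <= k1 * Rabs s * ms ^ 2)
    by (apply Rmult_le_pos; [apply Rmult_le_pos; [lra | apply Rabs_pos] | apply pow2_ge_0]).
  nra.
Qed.

Lemma first_quadrant_invariant : positively_invariant k0 k1 km1 k2 eT first_quadrant.
Proof.
  intros T s c HT Hsol [Hs0 Hc0] t Ht. simpl in *.
  assert (Hzero : forall x, 0 <= x <= t -> negsq (s x) + negsq (c x) = 0).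
  { apply (gronwall_vanishing _
             (fun x => 2 * Rmin (s x) 0 * F (s x) (c x) + 2 * Rmin (c x) 0 * G (s x) (c x))
             (fun x => 2 * k1 * (Rabs (eT - c x) + Rabs (s x)) + km1 + k1 * eT)); [lra | | | | |].
    - intros x Hx. destruct (Hsol x ltac:(lra)).
      apply is_derive_plus_R; apply is_derive_negsq_comp; auto.
    - intros x Hx. destruct (solution_continuous s c _ x Hsol ltac:(lra)). continuity_R.
    - intros x _. apply quadrant_negsq_ineq.
    - intros x _. pose proof (negsq_ge0 (s x)). pose proof (negsq_ge0 (c x)). lra.
    - rewrite (proj2 (negsq_eq0 _) Hs0), (proj2 (negsq_eq0 _) Hc0). ring. }
  specialize (Hzero t ltac:(lra)). pose proof (negsq_ge0 (s t)). pose proof (negsq_ge0 (c t)).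
  split; apply negsq_eq0; simpl; lra.
Qed.

Lemma c_le_eT_invariant :
  positively_invariant k0 k1 km1 k2 eT (fun p => first_quadrant p /\ snd p <= eT).
Proof.
  intros T s c HT Hsol [HQ Hc0] t Ht. simpl in *.
  pose proof (first_quadrant_invariant T s c HT Hsol HQ) as FQ.
  split; [apply FQ, Ht |].
  enough (0 <= eT - c t) by lra.
  apply (nonneg_preserved (fun x => eT - c x) (fun x => - G (s x) (c x)) (fun x => - (k1 * s x)) 0 t);
    [lra | | | | lra | lra].
  - intros x Hx. apply is_derive_const_minus, (proj2 (Hsol x ltac:(lra))).
  - intros x Hx. destruct (solution_continuous s c _ x Hsol ltac:(lra)). continuity_R.
  - intros x Hx _. destruct (FQ x ltac:(lra)) as [Hs Hc]. simpl in Hs, Hc. unfold fc. nra.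
Qed.

Lemma eventually_c_le_eT : 0 < km1 + k2 -> 0 < eT ->
  forall s c : R -> R, solution_on s c (fun t => 0 <= t) ->
  first_quadrant (s 0, c 0) -> exists t, 0 < t /\ c t <= eT.
Proof.
  intros Ha He s c Hsol HQ.
  assert (Hsol' : forall T, 0 < T -> solution_on s c (fun t => 0 <= t < T))
    by (intros T HT t Ht; apply Hsol; simpl in *; lra).
  destruct (Rle_or_lt (c 0) eT) as [Hc0 | Hc0].
  { exists 1. split; [lra |].
    apply (c_le_eT_invariant 2 s c ltac:(lra) (Hsol' 2 ltac:(lra)) (conj HQ Hc0)). lra. }
  apply NNPP. intros Hnot.
  assert (Habove : forall t, 0 <= t -> eT <= c t).
  { intros t Ht. destruct (Req_dec t 0) as [-> | Hne]; [lra |].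
    apply Rnot_lt_le. intros Hlt. apply Hnot. exists t. split; lra. }
  (* Above eT, c' <= -(km1 + k2) eT, so c would fall below eT by time t1. *)
  set (t1 := c 0 / ((km1 + k2) * eT)).
  assert (Ht1 : 0 < t1) by (apply Rdiv_lt_0_compat; nra).
  assert (Hdecay : c t1 + (km1 + k2) * eT * t1 <= c 0 + (km1 + k2) * eT * 0).
  { apply (derive_nonpos_le (fun t => c t + (km1 + k2) * eT * t)
             (fun t => G (s t) (c t) + (km1 + k2) * eT)); [lra | |].
    - intros t Ht. apply is_derive_plus_R; [apply (proj2 (Hsol t ltac:(lra))) |].
      auto_derive; [exact I | ring].
    - intros t Ht.
      destruct (first_quadrant_invariant (t + 1) s c ltac:(lra) (Hsol' (t + 1) ltac:(lra)) HQ t)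
        as [Hs _]; [lra |]. simpl in Hs. specialize (Habove t ltac:(lra)).
      assert (0 <= k1 * s t) by (apply Rmult_le_pos; lra). unfold fc. nra. }
  replace ((km1 + k2) * eT * t1) with (c 0) in Hdecay by (unfold t1; field; nra).
  specialize (Habove t1 ltac:(lra)). lra.
Qed.

Definition box_lipschitz (m : R) : R := k1 * eT + k1 * m + km1 + k2 + 1.

Lemma box_lipschitz_pos m : 0 <= m -> 0 < box_lipschitz m.
Proof.
  intros Hm. unfold box_lipschitz. assert (0 <= k1 * eT) by nra. assert (0 <= k1 * m) by nra. lra.
Qed.

Lemma field_lipschitz_box m a b a' b' :
  0 <= a <= m -> 0 <= b <= m -> 0 <= a' <= m -> 0 <= b' <= m ->
  Rabs (F a b - F a' b') <= box_lipschitz m * (Rabs (a - a') + Rabs (b - b')) /\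
  Rabs (G a b - G a' b') <= box_lipschitz m * (Rabs (a - a') + Rabs (b - b')).
Proof.
  intros Ha Hb Ha' Hb'. unfold fs, fc, box_lipschitz.
  set (da := Rabs (a - a')). set (db := Rabs (b - b')).
  assert (0 <= da) by apply Rabs_pos. assert (0 <= db) by apply Rabs_pos.
  assert (0 <= k1 * eT) by nra.
  pose proof (scaled_abs_le (k1 * eT) (a - a') (k1 * eT) da ltac:(lra) (Rle_refl _)).
  pose proof (scaled_abs_le (k1 * a) (b - b') (k1 * m) db ltac:(nra) (Rle_refl _)).
  pose proof (scaled_abs_le (k1 * b') (a - a') (k1 * m) da ltac:(nra) (Rle_refl _)).
  pose proof (scaled_abs_le km1 (b - b') km1 db ltac:(lra) (Rle_refl _)).
  pose proof (scaled_abs_le (km1 + k2) (b - b') (km1 + k2) db ltac:(lra) (Rle_refl _)).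
  assert (0 <= k1 * m) by nra.
  split; apply Rabs_le; split; nra.
Qed.

Section Existence.

Variables (s0 c0 : R).
Hypotheses (hs0 : 0 <= s0) (hc0 : 0 <= c0).

(* box_height |t| exceeds the a priori bound s + c <= s0 + c0 + k0 t of forward solutions in the
   quadrant, so along them the clipped field is the true one. *)
Definition box_height (L : R) : R := s0 + c0 + k0 * L + 1.

Definition clipped_F (t x y : R) : R :=
  F (clip (box_height (Rabs t)) x) (clip (box_height (Rabs t)) y).
Definition clipped_G (t x y : R) : R :=
  G (clip (box_height (Rabs t)) x) (clip (box_height (Rabs t)) y).

Lemma box_height_pos L : 0 <= L -> 0 < box_height L.
Proof. intros HL. unfold box_height. nra. Qed.

Lemma clip_in_box L t x : Rabs t <= L -> 0 <= clip (box_height (Rabs t)) x <= box_height L.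
Proof.
  intros Ht. pose proof (Rabs_pos t).
  pose proof (clip_range (box_height (Rabs t)) x ltac:(apply Rlt_le, box_height_pos; lra)).
  unfold box_height in *. nra.
Qed.

Lemma clipped_lipschitz L t x y x' y' : Rabs t <= L ->
  Rabs (clipped_F t x y - clipped_F t x' y')
    <= box_lipschitz (box_height L) * (Rabs (x - x') + Rabs (y - y')) /\
  Rabs (clipped_G t x y - clipped_G t x' y')
    <= box_lipschitz (box_height L) * (Rabs (x - x') + Rabs (y - y')).
Proof.
  intros Ht. pose proof (Rabs_pos t).
  pose proof (box_lipschitz_pos (box_height L) ltac:(apply Rlt_le, box_height_pos; lra)).
  pose proof (clip_lipschitz (box_height (Rabs t)) x x').
  pose proof (clip_lipschitz (box_height (Rabs t)) y y').
  destruct (field_lipschitz_box (box_height L) _ _ _ _ (clip_in_box L t x Ht) (clip_in_box L t y Ht)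
              (clip_in_box L t x' Ht) (clip_in_box L t y' Ht)).
  unfold clipped_F, clipped_G. split; (eapply Rle_trans; [eassumption |]); apply Rmult_le_compat_l; lra.
Qed.

Lemma clipped_bounded L t x y : Rabs t <= L ->
  Rabs (clipped_F t x y) <= k0 + 2 * box_height L * box_lipschitz (box_height L) /\
  Rabs (clipped_G t x y) <= k0 + 2 * box_height L * box_lipschitz (box_height L).
Proof.
  intros Ht. pose proof (Rabs_pos t) as Ht0.
  assert (Hbox : 0 <= 0 <= box_height L) by (pose proof (box_height_pos L); lra).
  pose proof (box_lipschitz_pos (box_height L) ltac:(lra)) as HK.
  pose proof (clip_in_box L t x Ht) as Ha. pose proof (clip_in_box L t y Ht) as Hb.
  destruct (field_lipschitz_box (box_height L) _ _ 0 0 Ha Hb Hbox Hbox) as [Hf Hg].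
  unfold clipped_F, clipped_G.
  set (a := clip (box_height (Rabs t)) x) in *. set (b := clip (box_height (Rabs t)) y) in *.
  replace (F 0 0) with k0 in Hf by (unfold fs; ring).
  replace (G 0 0) with 0 in Hg by (unfold fc; ring).
  rewrite !Rminus_0_r, (Rabs_pos_eq a), (Rabs_pos_eq b) in Hf by lra.
  rewrite !Rminus_0_r, (Rabs_pos_eq a), (Rabs_pos_eq b) in Hg by lra.
  assert (box_lipschitz (box_height L) * (a + b) <= 2 * box_height L * box_lipschitz (box_height L))
    by nra.
  split.
  - replace (F a b) with ((F a b - k0) + k0) by ring.
    eapply Rle_trans; [apply Rabs_triang |]. rewrite (Rabs_pos_eq k0) by lra. lra.
  - lra.
Qed.

Lemma clipped_comp_continuous (a b : R -> R) t : continuous a t -> continuous b t ->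
  continuous (fun u => clipped_F u (a u) (b u)) t /\ continuous (fun u => clipped_G u (a u) (b u)) t.
Proof.
  intros Ha Hb.
  assert (Hh : continuous (fun u => box_height (Rabs u)) t) by (unfold box_height; continuity_R).
  pose proof (continuous_clip _ _ t Hh Ha). pose proof (continuous_clip _ _ t Hh Hb).
  unfold clipped_F, clipped_G, fs, fc. split; continuity_R.
Qed.

Lemma clipped_solution : exists x y : R -> R, x 0 = s0 /\ y 0 = c0 /\
  forall t, is_derive x t (clipped_F t (x t) (y t)) /\ is_derive y t (clipped_G t (x t) (y t)).
Proof.
  apply (picard_global_solution clipped_F clipped_G
           (fun L => k0 + 2 * box_height L * box_lipschitz (box_height L))
           (fun L => box_lipschitz (box_height L))).
  - intros a b t Ha Hb. apply (proj1 (clipped_comp_continuous a b t Ha Hb)).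
  - intros a b t Ha Hb. apply (proj2 (clipped_comp_continuous a b t Ha Hb)).
  - intros L HL. apply box_lipschitz_pos, Rlt_le, box_height_pos, HL.
  - apply clipped_bounded.
  - apply clipped_lipschitz.
Qed.

Lemma clipped_solution_in_box (x y : R -> R) : x 0 = s0 -> y 0 = c0 ->
  (forall t, is_derive x t (clipped_F t (x t) (y t)) /\ is_derive y t (clipped_G t (x t) (y t))) ->
  forall t, 0 <= t -> 0 <= x t /\ 0 <= y t /\ x t + y t <= s0 + c0 + k0 * t.
Proof.
  intros Hx0 Hy0 Hd t Ht.
  assert (Hclip0 : forall u z, z <= 0 -> clip (box_height (Rabs u)) z = 0)
    by (intros u z Hz; apply clip_nonpos; [apply Rlt_le, box_height_pos, Rabs_pos | exact Hz]).
  assert (Hclip : forall u z, 0 <= clip (box_height (Rabs u)) z)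
    by (intros u z; apply clip_range, Rlt_le, box_height_pos, Rabs_pos).
  repeat split.
  - apply (nonneg_preserved x (fun u => clipped_F u (x u) (y u)) (fun _ => 0) 0 t);
      [lra | intros u _; apply (proj1 (Hd u)) | intros u _; apply continuous_const | | lra | lra].
    + intros u _ Hu. unfold clipped_F, fs. rewrite (Hclip0 u (x u)) by lra.
      pose proof (Hclip u (y u)). nra.
  - apply (nonneg_preserved y (fun u => clipped_G u (x u) (y u)) (fun _ => 0) 0 t);
      [lra | intros u _; apply (proj2 (Hd u)) | intros u _; apply continuous_const | | lra | lra].
    + intros u _ Hu. unfold clipped_G, fc. rewrite (Hclip0 u (y u)) by lra.
      pose proof (Rmult_le_pos (k1 * eT) _ ltac:(nra) (Hclip u (x u))). nra.
  - enough (x t + y t - k0 * t <= x 0 + y 0 - k0 * 0) by lra.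
    apply (derive_nonpos_le (fun u => x u + y u - k0 * u)
             (fun u => clipped_F u (x u) (y u) + clipped_G u (x u) (y u) - k0)); [lra | |].
    + intros u _. apply is_derive_minus_R; [apply is_derive_plus_R; apply (Hd u) |].
      auto_derive; [exact I | ring].
    + intros u _. unfold clipped_F, clipped_G, fs, fc. pose proof (Hclip u (y u)). nra.
Qed.

Lemma global_existence : exists s c : R -> R, s 0 = s0 /\ c 0 = c0 /\
  solution_on s c (fun t => 0 <= t).
Proof.
  destruct clipped_solution as (x & y & Hx0 & Hy0 & Hd).
  exists x, y. split; [exact Hx0 | split; [exact Hy0 |]].
  intros t Ht. destruct (clipped_solution_in_box x y Hx0 Hy0 Hd t Ht) as (Hx & Hy & Hsum).
  assert (x t + y t < box_height (Rabs t)) by (rewrite Rabs_pos_eq by lra; unfold box_height; lra).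
  destruct (Hd t) as [Dx Dy]. unfold clipped_F, clipped_G in Dx, Dy.
  rewrite !clip_id in Dx, Dy by lra. split; assumption.
Qed.

End Existence.

(** * Closed orbits *)

Definition lyapunov (sg s c : R) : R :=
  (k1 * s - (km1 + k2) * c / (eT - c)) ^ 2 / 2 - k1 * k2 * c
  - k1 * (k2 * eT - k0) * ln (sg * (eT - c)).

(* With w = k1 s - (km1 + k2) c / (eT - c) one has c' = (eT - c) w, and along solutions
   the Lyapunov function decreases (resp. increases) on either side of the line c = eT. *)
Lemma lyapunov_is_derive (s c : R -> R) sg t : 0 < sg * (eT - c t) ->
  is_derive s t (F (s t) (c t)) -> is_derive c t (G (s t) (c t)) ->
  is_derive (fun t => lyapunov sg (s t) (c t)) t
    (- ((k1 * s t - (km1 + k2) * c t / (eT - c t)) ^ 2 / (eT - c t))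
     * (k1 * (eT - c t) ^ 2 + (km1 + k2) * eT)).
Proof.
  intros Hpos Ds Dc.
  assert (He : eT - c t <> 0) by (intros E; rewrite E, Rmult_0_r in Hpos; lra).
  assert (Hsg : sg <> 0) by (intros E; rewrite E, Rmult_0_l in Hpos; lra).
  unfold lyapunov. eapply is_derive_eq.
  - auto_derive; [repeat split; auto; eexists; eauto | reflexivity].
  - change (Derive (fun x => s x) t) with (Derive s t).
    change (Derive (fun x => c x) t) with (Derive c t).
    rewrite (is_derive_unique _ _ _ Ds), (is_derive_unique _ _ _ Dc). unfold fs, fc. field. auto.
Qed.

Section ClosedOrbits.

Variables (s c : R -> R) (T : R).
Hypotheses (HT : 0 < T) (Hs : periodic s T) (Hc : periodic c T).
Hypotheses (Ds : forall t, is_derive s t (F (s t) (c t)))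
           (Dc : forall t, is_derive c t (G (s t) (c t))).

Lemma periodic_s_const : (forall t, c t = c 0) -> forall t, s t = s 0.
Proof.
  intros Hconst.
  apply (periodic_autonomous_const (fun z => F z (c 0))
           (fun z => (k0 + km1 * c 0) * z - k1 * (eT - c 0) * z ^ 2 / 2) s T HT Hs).
  - intros z. eapply is_derive_eq; [auto_derive; [exact I | reflexivity] |]. unfold fs. field.
  - intros t. rewrite <- (Hconst t). apply Ds.
Qed.

Lemma periodic_c_const_km1_k2_zero : km1 + k2 = 0 -> forall t, c t = c 0.
Proof.
  intros Ha. assert (km1 = 0) by lra. assert (k2 = 0) by lra. subst km1 k2.
  destruct (periodic_derive_nonneg_const (fun t => s t + c t) (fun _ => k0) T HT) as [Hsum _].
  - intros t. simpl. now rewrite Hs, Hc.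
  - intros t. eapply is_derive_eq; [apply is_derive_plus_R; [apply Ds | apply Dc] |].
    unfold fs, fc. ring.
  - intros _. exact h0.
  - simpl in Hsum. set (u0 := s 0 + c 0) in Hsum.
    apply (periodic_autonomous_const (fun z => k1 * (eT - z) * (u0 - z))
             (fun z => k1 * (eT * u0 * z - (eT + u0) * z ^ 2 / 2 + z ^ 3 / 3)) c T HT Hc).
    + intros z. eapply is_derive_eq; [auto_derive; [exact I | reflexivity] | field].
    + intros t. eapply is_derive_eq; [apply Dc |].
      replace (s t) with (u0 - c t) by (rewrite <- (Hsum t); ring). unfold fc. ring.
Qed.

Lemma periodic_c_const_k1_zero : k1 = 0 -> forall t, c t = c 0.
Proof.
  intros Hk1.
  apply (periodic_autonomous_const (fun z => - (km1 + k2) * z) (fun z => - (km1 + k2) * z ^ 2 / 2)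
           c T HT Hc).
  - intros z. eapply is_derive_eq; [auto_derive; [exact I | reflexivity] | field].
  - intros t. eapply is_derive_eq; [apply Dc |]. unfold fc. rewrite Hk1. ring.
Qed.

Lemma periodic_c_const_hitting_eT : 0 < km1 + k2 -> forall t1, c t1 = eT -> forall t, c t = c 0.
Proof.
  intros Ha t1 Ht1.
  assert (Hs_cont : forall t, continuous s t) by (intros t; eapply is_derive_continuous, Ds).
  assert (Hgc : forall t, continuous (fun t => - (k1 * s t + (km1 + k2))) t)
    by (intros t; specialize (Hs_cont t); continuity_R).
  (* (eT - c)' >= -(k1 s + km1 + k2) (eT - c), and likewise for c once eT = 0: both signs propagate. *)
  assert (Hle : forall t, c t <= eT).
  { intros t. enough (0 <= eT - c t) by lra.
    apply (periodic_nonneg (fun t => eT - c t) (fun t => - G (s t) (c t))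
             (fun t => - (k1 * s t + (km1 + k2))) T t1 HT); [| | exact Hgc | | lra].
    - intros x. simpl. now rewrite Hc.
    - intros x. apply is_derive_const_minus, Dc.
    - intros x _. unfold fc. nra. }
  assert (Hmax : G (s t1) (c t1) = 0).
  { apply (is_derive_at_max_eq0 c t1); [intros y; rewrite Ht1; apply Hle | apply Dc]. }
  rewrite Ht1 in Hmax. unfold fc in Hmax.
  assert (HeT : eT = 0) by nra.
  assert (Hge : forall t, 0 <= c t).
  { apply (periodic_nonneg c (fun t => G (s t) (c t)) (fun t => - (k1 * s t + (km1 + k2))) T t1 HT);
      [exact Hc | exact Dc | exact Hgc | intros x _; unfold fc; rewrite HeT; nra | lra]. }
  intros t. pose proof (Hle t). pose proof (Hge t). pose proof (Hle 0). pose proof (Hge 0). lra.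
Qed.

Lemma periodic_lyapunov_flat sg : 0 < k1 -> (forall t, 0 < sg * (eT - c t)) ->
  forall t, k1 * s t - (km1 + k2) * c t / (eT - c t) = 0.
Proof.
  intros Hk1 Hside.
  assert (He : forall t, eT - c t <> 0) by (intros t E; specialize (Hside t); rewrite E in Hside; lra).
  set (w t := k1 * s t - (km1 + k2) * c t / (eT - c t)).
  set (q t := k1 * (eT - c t) ^ 2 + (km1 + k2) * eT).
  assert (Hq : forall t, 0 < q t).
  { intros t. unfold q. pose proof (pow2_gt_0 _ (He t)). assert (0 <= (km1 + k2) * eT) by nra. nra. }
  destruct (periodic_derive_nonneg_const (fun t => - sg * lyapunov sg (s t) (c t))
              (fun t => sg * (eT - c t) * (w t ^ 2 * q t / (eT - c t) ^ 2)) T HT) as [_ Hzero].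
  - intros t. simpl. now rewrite Hs, Hc.
  - intros t. eapply is_derive_eq.
    + apply (is_derive_scal (fun t => lyapunov sg (s t) (c t))), lyapunov_is_derive;
        [apply Hside | apply Ds | apply Dc].
    + unfold scal; simpl. unfold mult; simpl. unfold w, q. field. apply He.
  - intros t. apply Rmult_le_pos; [apply Rlt_le, Hside |].
    apply Rdiv_le_0_compat; [apply Rmult_le_pos; [apply pow2_ge_0 | apply Rlt_le, Hq] |].
    apply pow2_gt_0, He.
  - intros t. specialize (Hzero t). specialize (Hside t).
    pose proof (Hq t) as Hqt. pose proof (pow2_gt_0 _ (He t)) as Hu2.
    assert (Hfrac : w t ^ 2 * q t / (eT - c t) ^ 2 = 0)
      by (apply Rmult_integral in Hzero as [? | ?]; lra).
    assert (Hwq : w t ^ 2 * q t = 0).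
    { unfold Rdiv in Hfrac. apply Rmult_integral in Hfrac as [? | Hinv]; [lra |].
      exfalso. apply (Rinv_neq_0_compat _ (Rgt_not_eq _ _ Hu2) Hinv). }
    assert (Hw2 : w t ^ 2 = 0) by (apply Rmult_integral in Hwq as [? | ?]; lra).
    rewrite <- Rsqr_pow2 in Hw2. exact (Rsqr_0_uniq _ Hw2).
Qed.

Lemma periodic_c_const_avoiding_eT : 0 < k1 -> (forall t, c t <> eT) -> forall t, c t = c 0.
Proof.
  intros Hk1 Hne.
  assert (Hside : forall t, 0 < (eT - c 0) * (eT - c t))
    by (apply same_side_of_never_eq; [intros t; eapply is_derive_continuous, Dc | exact Hne]).
  pose proof (periodic_lyapunov_flat (eT - c 0) Hk1 Hside) as Hw.
  apply (periodic_derive_nonneg_const c (fun _ => 0) T HT Hc); [| intros; lra].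
  intros t. eapply is_derive_eq; [apply Dc |].
  assert (eT - c t <> 0) by (intros E; specialize (Hside t); rewrite E in Hside; lra).
  unfold fc. replace (k1 * (eT - c t) * s t - (km1 + k2) * c t)
    with ((eT - c t) * (k1 * s t - (km1 + k2) * c t / (eT - c t))) by (field; auto).
  rewrite Hw. ring.
Qed.

Lemma periodic_solution_const : forall t, s t = s 0 /\ c t = c 0.
Proof.
  assert (Hconst : forall t, c t = c 0).
  { destruct (Req_dec (km1 + k2) 0) as [Ha | Ha]; [now apply periodic_c_const_km1_k2_zero |].
    destruct (Req_dec k1 0) as [Hk1 | Hk1]; [now apply periodic_c_const_k1_zero |].
    destruct (classic (exists t1, c t1 = eT)) as [[t1 Ht1] | Hnever].
    - apply (periodic_c_const_hitting_eT ltac:(lra) t1 Ht1).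
    - apply periodic_c_const_avoiding_eT; [lra |]. intros t E. apply Hnever. now exists t. }
  intros t. split; [apply periodic_s_const, Hconst | apply Hconst].
Qed.

End ClosedOrbits.

End Dynamics.

Theorem lemma3p1 (k0 k1 km1 k2 eT : R)
  (h0 : 0 <= k0) (h1 : 0 <= k1) (hm1 : 0 <= km1) (h2 : 0 <= k2) (hT : 0 <= eT) :
  (* (a) *)
  (infinite_set (stationary k0 k1 km1 k2 eT) <->
     (k0 = 0 /\ k1 = 0) \/ (k0 = 0 /\ eT = 0) \/ (k0 = 0 /\ k2 = 0)) /\
  (* (b) *)
  (~ infinite_set (stationary k0 k1 km1 k2 eT) ->
     ~ (exists p, stationary k0 k1 km1 k2 eT p) \/
     (exists! p, stationary k0 k1 km1 k2 eT p)) /\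
  ((exists! p, stationary k0 k1 km1 k2 eT p) <->
     k1 <> 0 /\ k2 <> 0 /\ k2 * eT - k0 <> 0) /\
  (k1 <> 0 -> k2 <> 0 -> k2 * eT - k0 <> 0 ->
     stationary k0 k1 km1 k2 eT (P0 k0 k1 km1 k2 eT) /\
     (first_quadrant (P0 k0 k1 km1 k2 eT) <-> k2 * eT - k0 > 0) /\
     (k2 * eT - k0 > 0 -> attracting_node k0 k1 km1 k2 eT (P0 k0 k1 km1 k2 eT)) /\
     (second_quadrant (P0 k0 k1 km1 k2 eT) <-> k2 * eT - k0 < 0) /\
     (k2 * eT - k0 < 0 -> saddle_point k0 k1 km1 k2 eT (P0 k0 k1 km1 k2 eT))) /\
  (* (c) *)
  positively_invariant k0 k1 km1 k2 eT first_quadrant /\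
  (forall s0 c0, first_quadrant (s0, c0) ->
     exists s c : R -> R, s 0 = s0 /\ c 0 = c0 /\
       is_solution_on k0 k1 km1 k2 eT s c (fun t => 0 <= t)) /\
  (0 < km1 + k2 ->
     positively_invariant k0 k1 km1 k2 eT (fun p => first_quadrant p /\ snd p <= eT)) /\
  (0 < km1 + k2 -> 0 < eT ->
     forall s c : R -> R, is_solution_on k0 k1 km1 k2 eT s c (fun t => 0 <= t) ->
       first_quadrant (s 0, c 0) -> exists t, 0 < t /\ c t <= eT) /\
  (* (d) no nonconstant closed trajectory (periodic solution) *)
  (forall (s c : R -> R) (T : R),
     is_solution_on k0 k1 km1 k2 eT s c (fun _ => True) -> 0 < T ->
     (forall t, s (t + T) = s t /\ c (t + T) = c t) ->
     forall t, s t = s 0 /\ c t = c 0).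

Proof.
  split; [now apply infinite_stationary_iff |].
  split; [now apply finite_stationary_cases |].
  split; [now apply unique_stationary_iff |].
  split.
  { intros Hk1 Hk2 HD.
    split; [now apply P0_stationary |].
    split; [now apply P0_first_quadrant_iff |].
    split; [now apply P0_attracting_node |].
    split; [now apply P0_second_quadrant_iff |].
    now apply P0_saddle_point. }
  split; [now apply first_quadrant_invariant |].
  split; [intros s0 c0 [Hs0 Hc0]; now apply global_existence |].
  split; [intros _; now apply c_le_eT_invariant |].
  split; [now apply eventually_c_le_eT |].
  intros s c T Hsol HT Hper.
  apply (periodic_solution_const k0 k1 km1 k2 eT h0 h1 hm1 h2 hT s c T HT);
    intros t; [apply Hper | apply Hper | apply (Hsol t I) | apply (Hsol t I)].
Qed.
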